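(* Let $n,N\ge1$ and positive integers $r_1,\dots,r_N,r$ with $r_i\le r\le\lfloor(n-1)/2\rfloor$; let $f:\mathbb{R}^{Nn}\to\mathbb{R}$ be nonnegative, level-bounded and continuously differentiable with Lipschitz gradient; let $(k,\mathcal{A}_i,\Omega,C_i)$ be given by one of Variants I, II, III in the context, and for $\lambda>0$ let $$F_\lambda(y)=f(y)+\delta_\Omega(y)+\sum_{i=1}^k\frac1{2\lambda}\mathrm{dist}^2(\mathcal{A}_i(y),C_i).$$ Consider the penalty method: pick positive sequences $\epsilon_t\downarrow0$ and $\lambda_t\downarrow0$, a number $\bar\lambda\ge0$, a point $y^{\rm feas}\in\Omega$ with $\mathcal{A}_i(y^{\rm feas})\in C_i$ for all $i$, and $y^0\in\Omega$. For $t=0,1,\dots$: set $y^{t,0}=y^t$ if $F_{\lambda_t}(y^t)\le F_{\lambda_t}(y^{\rm feas})$ and $y^{t,0}=y^{\rm feas}$ otherwise; run the vNPG$_{\rm major}$ algorithm (described in the context) for $F_{\lambda_t}$ from $y^{t,0}$ and stop at an iterate $y^{t,l_t}$ satisfying $$\|y^{t,l_t+1}-y^{t,l_t}\|\le\epsilon_t,\quad F_{\lambda_t}(y^{t,l_t})\le F_{\lambda_t}(y^{t,0}),$$ $$\mathrm{dist}\Big(0,\nabla f(y^{t,l_t})+N_\Omega(y^{t,l_t+1})+\sum_{i=1}^k\frac1{\lambda_t}\mathcal{A}_i^*\big(\mathcal{A}_i(y^{t,l_t})-\mathcal{P}_{C_i}(\mathcal{A}_i(y^{t,l_t}))\big)\Big)\le\epsilon_t;$$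 set $y^{t+1}=y^{t,l_t}$; if $\lambda_{t+1}<\bar\lambda$ and $\bar\lambda>0$, stop. Then for every $t\ge1$ for which $y^t$ is generated and every $i=1,\dots,k$, $$\mathrm{dist}(\mathcal{A}_i(y^t),C_i)\le\sqrt{2\lambda_{t-1}f(y^{\rm feas})}.$$
   Context: For $x\in\mathbb{R}^n$ and $1\le l\le n$, $\mathcal{H}_l(x)\in\mathbb{R}^{l\times(n-l+1)}$ has $(i,j)$ entry $x(i+j-1)$. For $y=(y_1^\top,\dots,y_N^\top)^\top$, $\mathcal{L}_i(y)=\mathcal{H}_{r_i+1}(y_i)$ and $\mathcal{L}(y)=[\mathcal{H}_{r+1}(y_1)\cdots\mathcal{H}_{r+1}(y_N)]$. Variant I: $k=1$, $\mathcal{A}_1=\mathcal{L}$, $\Omega=\{y:\mathrm{rank}\,\mathcal{L}_i(y)\le r_i\ \forall i\}$, $C_1=\{Y:\mathrm{rank}\,Y\le r\}$. Variant II: $k=N$, $\mathcal{A}_i=\mathcal{L}_i$, $\Omega=\{y:\mathrm{rank}\,\mathcal{L}(y)\le r\}$, $C_i=\{Y:\mathrm{rank}\,Y\le r_i\}$. Variant III: $k=N+1$, $\mathcal{A}_i=\mathcal{L}_i$ ($i\le N$), $\mathcal{A}_{N+1}=\mathcal{L}$, $\Omega=\mathbb{R}^{Nn}$, $C_i=\{Y:\mathrm{rank}\,Y\le r_i\}$ ($i\le N$), $C_{N+1}=\{Y:\mathrm{rank}\,Y\le r\}$. Matrix distances/projections use the Frobenius norm; $N_\Omega$ is the limiting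 normal cone; $\delta_\Omega$ the indicator function. Pseudo-projection $\mathcal{P}^s_\Omega(x;u)$ ($u\in\Omega$): all $y\in\Omega$ with $x-y\in N_\Omega(y)$ and $\|y-x\|\le\|u-x\|$. vNPG$_{\rm major}$ for $F_\lambda$ from a starting point $y^0\in\Omega$, with $h(y)=f(y)+\sum_i\frac1{2\lambda}\|\mathcal{A}_i(y)\|_F^2$ and parameters $L_{\max}>L_{\min}>0$, $\tau>1$, $c>0$, integer $M\ge0$: at iteration $l$ pick $\xi^l\in\sum_i\frac1\lambda\mathcal{A}_i^*(\mathcal{P}_{C_i}(\mathcal{A}_i(y^l)))$, $L_l^0\in[L_{\min},L_{\max}]$, and for $i=0,1,\dots$ take $u_i^l\in\mathcal{P}^s_\Omega(y^l-\frac1{L_l^0\tau^i}(\nabla h(y^l)-\xi^l);y^l)$ until $F_\lambda(u_i^l)\le\max_{[l-M]_+\le j\le l}F_\lambda(y^j)-\frac c2\|u_i^l-y^l\|^2$; then $y^{l+1}=u_i^l$. *)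

From HB Require Import structures.
From mathcomp Require Import all_boot all_order all_algebra.
From mathcomp Require Import all_classical all_reals all_analysis.
From Stdlib Require List.
Set Implicit Arguments. Unset Strict Implicit. Unset Printing Implicit Defensive.
Import Order.TTheory GRing.Theory Num.Theory.
Local Open Scope classical_set_scope.
Local Open Scope ring_scope.

Section Defs.
Variable R : realType.

Definition finner (p q : nat) (A B : 'M[R]_(p, q)) : R :=
  \sum_(i < p) \sum_(j < q) A i j * B i j.
Definition normF (p q : nat) (A : 'M[R]_(p, q)) : R := Num.sqrt (finner A A).

(* extended-valued distance (dist(x, empty) = +oo) and real distance *)
Definition edist (p q : nat) (X : 'M[R]_(p, q)) (S : set 'M[R]_(p, q)) : \bar R :=
  ereal_inf [set (normF (X - Y))%:E | Y in S].
Definition dist (p q : nat) (X : 'M[R]_(p, q)) (S : set 'M[R]_(p, q)) : R :=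
  fine (edist X S).

Definition rankset (p q s : nat) : set 'M[R]_(p, q) := [set Y | (\rank Y <= s)%N].

Definition projset (p q : nat) (S : set 'M[R]_(p, q)) (X : 'M[R]_(p, q)) :
  set 'M[R]_(p, q) := [set Y | S Y /\ normF (X - Y) = dist X S].

(* Hankel matrix H_l(x) in R^{l x (n-l+1)}, (i,j) entry x(i+j-1) (1-based) *)
Definition xat (n : nat) (x : 'rV[R]_n) (k : nat) : R :=
  if @insub nat (fun k => k < n)%N 'I_n k is Some kk then x 0 kk else 0.
Definition hankel (n l : nat) (x : 'rV[R]_n) : 'M[R]_(l, n - l + 1) :=
  \matrix_(i < l, j < n - l + 1) xat x (i + j).

(* points y = (y_1;...;y_N) of R^{Nn} are stored as N x n matrices, y_i = row i y *)
Definition Lblk (N n : nat) (rr : 'I_N -> nat) (i : 'I_N) (y : 'M[R]_(N, n)) :=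
  hankel (rr i).+1 (row i y).
Definition Lbig (N n r : nat) (y : 'M[R]_(N, n)) :=
  \mxrow_(j < N) hankel r.+1 (row j y).

(* adjoint (w.r.t. Frobenius inner products) of a linear map, in coordinates *)
Definition adj (N n p q : nat) (A : 'M[R]_(N, n) -> 'M[R]_(p, q)) (Z : 'M[R]_(p, q))
  : 'M[R]_(N, n) := \matrix_(a < N, b < n) finner Z (A (delta_mx a b)).

(* a constraint: linear map A_i into p x q matrices and C_i = {rank <= s} *)
Record constr (N n : nat) := Constr {
  cp : nat; cq : nat; cA : 'M[R]_(N, n) -> 'M[R]_(cp, cq); cs : nat }.
Arguments cA {N n} c _.
Arguments cp {N n} c.
Arguments cq {N n} c.
Arguments cs {N n} c.

Inductive variant := VariantI | VariantII | VariantIII.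

Definition vOmega (N n : nat) (rr : 'I_N -> nat) (r : nat) (v : variant)
  : set 'M[R]_(N, n) :=
  match v with
  | VariantI => [set y | forall i, (\rank (Lblk rr i y) <= rr i)%N]
  | VariantII => [set y | (\rank (Lbig r y) <= r)%N]
  | VariantIII => setT
  end.

Definition blk_constrs (N n : nat) (rr : 'I_N -> nat) : seq (constr N n) :=
  [seq @Constr N n _ _ (Lblk rr i) (rr i) | i <- enum 'I_N].

Definition vconstrs (N n : nat) (rr : 'I_N -> nat) (r : nat) (v : variant)
  : seq (constr N n) :=
  match v with
  | VariantI => [:: @Constr N n _ _ (@Lbig N n r) r]
  | VariantII => blk_constrs n rr
  | VariantIII => rcons (blk_constrs n rr) (@Constr N n _ _ (@Lbig N n r) r)
  end.

Definition Cset (N n : nat) (c : constr N n) : set 'M[R]_(cp c, cq c) :=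
  @rankset (cp c) (cq c) (cs c).
Arguments Cset {N n} c.

Definition Flam (N n : nat) (f : 'M[R]_(N, n) -> R) (Om : set 'M[R]_(N, n))
  (cs : seq (constr N n)) (lam : R) (y : 'M[R]_(N, n)) : \bar R :=
  if `[< Om y >] then
    (f y + \sum_(c <- cs) (2 * lam)^-1 * (dist (cA c y) (Cset c)) ^+ 2)%:E
  else +oo%E.

Definition is_gradient (N n : nat) (f : 'M[R]_(N, n) -> R) (g : 'M[R]_(N, n) -> 'M[R]_(N, n)) :=
  forall y e, 0 < e -> exists2 d, 0 < d & forall h, normF h < d ->
    `|f (y + h) - f y - finner (g y) h| <= e * normF h.

Definition lipschitz_map (N n : nat) (g : 'M[R]_(N, n) -> 'M[R]_(N, n)) :=
  exists Lg : R, 0 <= Lg /\ forall y z, normF (g y - g z) <= Lg * normF (y - z).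

Definition level_bounded (N n : nat) (f : 'M[R]_(N, n) -> R) :=
  forall a : R, exists Mb : R, forall y, f y <= a -> normF y <= Mb.

Definition seq_cvgF (N n : nat) (u : nat -> 'M[R]_(N, n)) (x : 'M[R]_(N, n)) :=
  forall e, 0 < e -> exists K, forall k, (K <= k)%N -> normF (u k - x) < e.

Definition frechet_normal (N n : nat) (Om : set 'M[R]_(N, n)) (y : 'M[R]_(N, n))
  : set 'M[R]_(N, n) :=
  [set v | Om y /\ forall e, 0 < e -> exists2 d, 0 < d & forall z, Om z ->
      normF (z - y) < d -> finner v (z - y) <= e * normF (z - y)].

Definition limiting_normal (N n : nat) (Om : set 'M[R]_(N, n)) (y : 'M[R]_(N, n))
  : set 'M[R]_(N, n) :=
  [set v | Om y /\ exists (ys vs : nat -> 'M[R]_(N, n)),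
      (forall k, Om (ys k)) /\ seq_cvgF ys y /\ seq_cvgF vs v /\
      (forall k, frechet_normal Om (ys k) (vs k))].

Definition pseudoproj (N n : nat) (Om : set 'M[R]_(N, n)) (x u : 'M[R]_(N, n))
  : set 'M[R]_(N, n) :=
  [set w | Om w /\ limiting_normal Om w (x - w) /\ normF (w - x) <= normF (u - x)].

Definition gradh (N n : nat) (gf : 'M[R]_(N, n) -> 'M[R]_(N, n))
  (cs : seq (constr N n)) (lam : R) (y : 'M[R]_(N, n)) : 'M[R]_(N, n) :=
  gf y + \sum_(c <- cs) lam^-1 *: adj (cA c) (cA c y).

Fixpoint xiset (N n : nat) (cs : seq (constr N n)) (lam : R) (y : 'M[R]_(N, n))
  : set 'M[R]_(N, n) :=
  match cs with
  | [::] => [set 0]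
  | c :: cs' => [set v | exists Z, projset (Cset c) (cA c y) Z /\
                  exists w, xiset cs' lam y w /\ v = lam^-1 *: adj (cA c) Z + w]
  end.

Fixpoint resset (N n : nat) (cs : seq (constr N n)) (lam : R) (y : 'M[R]_(N, n))
  : set 'M[R]_(N, n) :=
  match cs with
  | [::] => [set 0]
  | c :: cs' => [set v | exists Z, projset (Cset c) (cA c y) Z /\
                  exists w, resset cs' lam y w /\
                  v = lam^-1 *: adj (cA c) (cA c y - Z) + w]
  end.

Definition vnpg_step (N n : nat) (f : 'M[R]_(N, n) -> R) (gf : 'M[R]_(N, n) -> 'M[R]_(N, n))
  (Om : set 'M[R]_(N, n)) (cs : seq (constr N n)) (lam Lmin Lmax tau c : R) (M : nat)
  (z : nat -> 'M[R]_(N, n)) (l : nat) : Prop :=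
  let F := Flam f Om cs lam in
  let accept (u : 'M[R]_(N, n)) :=
    (F u <= \big[Order.max/-oo%E]_((l - M)%N <= j < l.+1) F (z j)
            - ((c / 2) * normF (u - z l) ^+ 2)%:E)%E in
  exists xi, xiset cs lam (z l) xi /\
  exists L0, Lmin <= L0 <= Lmax /\
  exists (m : nat) (u : nat -> 'M[R]_(N, n)),
    (forall i, (i <= m)%N ->
       pseudoproj Om (z l - (L0 * tau ^+ i)^-1 *: (gradh gf cs lam (z l) - xi)) (z l) (u i)) /\
    (forall i, (i < m)%N -> ~ accept (u i)) /\ accept (u m) /\ z l.+1 = u m.

Definition stop_crit (N n : nat) (f : 'M[R]_(N, n) -> R) (gf : 'M[R]_(N, n) -> 'M[R]_(N, n))
  (Om : set 'M[R]_(N, n)) (cs : seq (constr N n)) (lam eps : R)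
  (z : nat -> 'M[R]_(N, n)) (l : nat) : Prop :=
  let F := Flam f Om cs lam in
  normF (z l.+1 - z l) <= eps /\ (F (z l) <= F (z 0%N))%E /\
  let S := [set x | exists v, limiting_normal Om (z l.+1) v /\
                     exists w, resset cs lam (z l) w /\ x = (gf (z l) + v + w)%R] in
  (edist 0 S <= eps%:E)%E.

Definition penalty_iter (N n : nat) (f : 'M[R]_(N, n) -> R) (gf : 'M[R]_(N, n) -> 'M[R]_(N, n))
  (Om : set 'M[R]_(N, n)) (cs : seq (constr N n)) (lam eps Lmin Lmax tau c : R) (M : nat)
  (yfeas yt ynext : 'M[R]_(N, n)) (z : nat -> 'M[R]_(N, n)) (lt : nat) : Prop :=
  let F := Flam f Om cs lam in
  z 0%N = (if (F yt <= F yfeas)%E then yt else yfeas) /\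
  (forall l, (l <= lt)%N -> vnpg_step f gf Om cs lam Lmin Lmax tau c M z l) /\
  stop_crit f gf Om cs lam eps z lt /\
  (forall l, (l < lt)%N -> ~ stop_crit f gf Om cs lam eps z l) /\
  ynext = z lt.

(* outer iteration t is executed (no stop triggered after iterations 0..t-1) *)
Definition runs (lam : nat -> R) (lambar : R) (t : nat) : Prop :=
  forall s, (s < t)%N -> ~ (lam s.+1 < lambar /\ 0 < lambar).

End Defs.

Arguments cA {R N n} c _.
Arguments cp {R N n} c.
Arguments cq {R N n} c.
Arguments cs {R N n} c.
Arguments Cset {R N n} c.
Arguments blk_constrs {R N n} rr.
Arguments vconstrs {R N n} rr r v.

From Pilot Require Import Defs.
From HB Require Import structures.
From mathcomp Require Import all_boot all_order all_algebra.
From mathcomp Require Import all_classical all_reals all_analysis.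
From Stdlib Require List.
Import Order.TTheory GRing.Theory Num.Theory numFieldNormedType.Exports.
Set Implicit Arguments. Unset Strict Implicit.
Local Open Scope classical_set_scope.
Local Open Scope ring_scope.

(* The warm start gives F_lam(y^{t,0}) <= F_lam(y^feas) and the stopping rule
   gives F_lam(y^{t+1}) <= F_lam(y^{t,0}).  Since y^feas is feasible,
   F_lam(y^feas) = f(y^feas), and since f >= 0 every single penalty term
   dist^2(A_i y^{t+1}, C_i) / (2 lam) is at most f(y^feas).  Nothing else about
   the inner solver (step sizes, line search, stationarity) is needed. *)

Lemma sum_In_ge (R : numDomainType) (T : Type) (F : T -> R) (s : seq T) (x : T) :
  (forall y, 0 <= F y) -> List.In x s -> F x <= \sum_(y <- s) F y.
Proof.
move=> F_ge0; elim: s => //= a s IHs [->|xs]; rewrite big_cons.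
  by rewrite lerDl sumr_ge0.
by rewrite (le_trans (IHs xs)) // lerDr.
Qed.

Lemma big1_In (R : nmodType) (T : Type) (F : T -> R) (s : seq T) :
  (forall x, List.In x s -> F x = 0) -> \sum_(y <- s) F y = 0.
Proof.
elim: s => [|a s IHs] F0; first by rewrite big_nil.
by rewrite big_cons F0 /= ?IHs ?add0r //; [move=> x xs; apply: F0; right | left].
Qed.

Section Distance.
Variables (R : realType) (p q : nat).
Implicit Types (X : 'M[R]_(p, q)) (S : set 'M[R]_(p, q)).

Lemma normF0 : normF (0 : 'M[R]_(p, q)) = 0.
Proof.
rewrite /normF /finner big1 ?sqrtr0 // => i _; rewrite big1 // => j _.
by rewrite mxE mulr0.
Qed.

Lemma edist_ge0 X S : (0 <= Defs.edist X S)%E.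
Proof. by apply/ereal_infP => _ [Y _ <-]; rewrite lee_fin sqrtr_ge0. Qed.

Lemma dist_ge0 X S : 0 <= dist X S.
Proof. exact/fine_ge0/edist_ge0. Qed.

Lemma dist_in_eq0 X S : S X -> dist X S = 0.
Proof.
move=> SX; rewrite /dist (_ : Defs.edist X S = 0%E) //.
apply/eqP; rewrite eq_le edist_ge0 andbT.
by apply: ge_ereal_inf; exists 0%E => //; exists X; rewrite ?subrr ?normF0.
Qed.

End Distance.

Section PenaltyFunction.
Variables (R : realType) (N n : nat) (f : 'M[R]_(N, n) -> R).
Variables (Om : set 'M[R]_(N, n)) (cs : seq (constr R N n)) (lam : R).
Hypothesis f_ge0 : forall y, 0 <= f y.
Hypothesis lam_gt0 : 0 < lam.

Lemma Flam_feasible y :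
  Om y -> (forall c, List.In c cs -> Cset c (cA c y)) ->
  Flam f Om cs lam y = (f y)%:E.
Proof.
move=> Omy yC; rewrite /Flam asboolT // big1_In ?addr0 // => c0 c0cs.
by rewrite dist_in_eq0 ?expr0n ?mulr0 //; apply: yC.
Qed.

Lemma dist_le_Flam y a c :
  (Flam f Om cs lam y <= a%:E)%E -> List.In c cs ->
  dist (cA c y) (Cset c) <= Num.sqrt (2 * lam * a).
Proof.
rewrite /Flam; case: asboolP => // _; rewrite lee_fin => Fya ccs.
set d := dist _ _.
have term_le : (2 * lam)^-1 * d ^+ 2 <= a.
  apply: le_trans Fya; rewrite -[leLHS]add0r lerD ?f_ge0 //.
  apply: (@sum_In_ge _ _ (fun c0 => (2 * lam)^-1 * dist (cA c0 y) (Cset c0) ^+ 2)) => //.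
  by move=> c0; rewrite mulr_ge0 ?sqr_ge0 // invr_ge0 mulr_ge0 // ltW.
have d2_le : d ^+ 2 <= 2 * lam * a by rewrite -ler_pdivrMl ?mulr_gt0.
have d_ge0 : 0 <= d by exact: dist_ge0.
by rewrite -(ger0_norm d_ge0) -sqrtr_sqr ler_wsqrtr.
Qed.

Lemma penalty_iter_Flam_le gf eps Lmin Lmax tau c M yfeas yt ynext z lt :
  penalty_iter f gf Om cs lam eps Lmin Lmax tau c M yfeas yt ynext z lt ->
  (Flam f Om cs lam ynext <= Flam f Om cs lam yfeas)%E.
Proof.
move=> [z0 [_ [[_ [Fz_le _]] [_ ->]]]].
apply: le_trans Fz_le _; rewrite z0.
by case: ifP.
Qed.

End PenaltyFunction.

Theorem theorem3p2 (R : realType) (n N : nat) (rr : 'I_N -> nat) (r : nat)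
  (hn : (1 <= n)%N) (hN : (1 <= N)%N)
  (hrr : forall i, (0 < rr i)%N /\ (rr i <= r)%N)
  (hr : (r <= (n - 1) %/ 2)%N)
  (f : 'M[R]_(N, n) -> R) (gf : 'M[R]_(N, n) -> 'M[R]_(N, n))
  (hf0 : forall y, 0 <= f y) (hflev : level_bounded f)
  (hgrad : is_gradient f gf) (hlip : lipschitz_map gf)
  (v : variant)
  (eps lam : nat -> R)
  (heps : forall t, 0 < eps t) (heps_dec : forall t, eps t.+1 <= eps t)
  (heps0 : eps @ \oo --> 0)
  (hlam : forall t, 0 < lam t) (hlam_dec : forall t, lam t.+1 <= lam t)
  (hlam0 : lam @ \oo --> 0)
  (lambar : R) (hlambar : 0 <= lambar)
  (yfeas : 'M[R]_(N, n))
  (hfeasO : vOmega rr r v yfeas)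
  (hfeasC : forall c, List.In c (vconstrs rr r v) -> Cset c (cA c yfeas))
  (Lmin Lmax tau c : R) (M : nat)
  (hL : 0 < Lmin /\ Lmin < Lmax) (htau : 1 < tau) (hc : 0 < c)
  (y : nat -> 'M[R]_(N, n)) (hy0 : vOmega rr r v (y 0%N))
  (z : nat -> nat -> 'M[R]_(N, n)) (lt : nat -> nat)
  (hiter : forall t, runs lam lambar t ->
     penalty_iter f gf (vOmega rr r v) (vconstrs rr r v) (lam t) (eps t)
       Lmin Lmax tau c M yfeas (y t) (y t.+1) (z t) (lt t)) :
  forall t, runs lam lambar t ->
  forall cn, List.In cn (vconstrs rr r v) ->
    dist (cA cn (y t.+1)) (Cset cn) <= Num.sqrt (2 * lam t * f yfeas).
Proof.
move=> t t_runs cn cn_in.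
have F_le := penalty_iter_Flam_le (hiter t t_runs).
rewrite (Flam_feasible f (lam t) hfeasO hfeasC) in F_le.
exact: (dist_le_Flam hf0 (hlam t) F_le cn_in).
Qed.
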